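(* Let $f:\mathcal X^n\to\mathcal T$ with $\mathcal T$ finite, $\varepsilon>0$, and let $M$ be $L_{0,1}$-unbiased and $\varepsilon$-differentially private, where $L_{0,1}(s,t)=\mathbf 1\{s\ne t\}$. Then for every $x\in\mathcal X^n$ and $t\in\mathcal T$, $$\mathbb P(M(x)=t)\ge e^{-2\,\mathrm{len}_f(x;t)\varepsilon}\,\mathbb P(M(x)=f(x)).$$
   Context: $d_H$ is the Hamming distance on $\mathcal X^n$; neighboring means $d_H\le1$. $M$ is $\varepsilon$-differentially private if $\mathbb P(M(x)\in S)\le e^\varepsilon\mathbb P(M(x')\in S)$ for all neighboring $x,x'$ and all $S$. $M$ is $L$-unbiased if $\mathbb E[L(M(x),f(x))]\le\mathbb E[L(M(x),t)]$ for all $x,t$; for $L_{0,1}$ this means $\mathbb P(M(x)=f(x))\ge\mathbb P(M(x)=t)$. The inverse sensitivity is $\mathrm{len}_f(x;t)=\inf\{d_H(x,x'):f(x')=t\}$ with $\inf\emptyset=+\infty$ and $e^{-\infty}=0$. *)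

From HB Require Import structures.
From mathcomp Require Import all_boot all_order all_algebra.
From mathcomp Require Import all_classical all_reals all_analysis.
Set Implicit Arguments. Unset Strict Implicit. Unset Printing Implicit Defensive.
Import Order.TTheory GRing.Theory Num.Theory.
Local Open Scope ring_scope.

(* Datasets: x : 'I_n -> X  (elements of X^n), X an arbitrary type.
   A mechanism M with values in the finite set T is represented by its
   output law:  pM x t = P(M(x) = t). *)

Definition dH (X : Type) (n : nat) (x y : 'I_n -> X) : nat :=
  #|[set i : 'I_n | `[< x i <> y i >]]|.

Definition neighboring (X : Type) (n : nat) (x y : 'I_n -> X) : Prop :=
  (dH x y <= 1)%N.

Definition is_mechanism (R : realType) (X : Type) (n : nat) (T : finType)
  (pM : ('I_n -> X) -> T -> R) : Prop :=
  forall x, (forall t, 0 <= pM x t) /\ \sum_(t : T) pM x t = 1.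

Definition probS (R : realType) (X : Type) (n : nat) (T : finType)
  (pM : ('I_n -> X) -> T -> R) (x : 'I_n -> X) (S : {set T}) : R :=
  \sum_(t in S) pM x t.

Definition eps_DP (R : realType) (X : Type) (n : nat) (T : finType)
  (pM : ('I_n -> X) -> T -> R) (eps : R) : Prop :=
  forall x x' : 'I_n -> X, neighboring x x' ->
  forall S : {set T}, probS pM x S <= expR eps * probS pM x' S.

Definition unbiased (R : realType) (X : Type) (n : nat) (T : finType)
  (L : T -> T -> R) (f : ('I_n -> X) -> T) (pM : ('I_n -> X) -> T -> R) : Prop :=
  forall x t, \sum_(s : T) pM x s * L s (f x) <= \sum_(s : T) pM x s * L s t.

Definition L01 (R : realType) (T : finType) (s t : T) : R := (s != t)%:R.

(* inverse sensitivity, valued in extended reals: inf of empty set = +oo *)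
Definition len_f (R : realType) (X : Type) (n : nat) (T : Type)
  (f : ('I_n -> X) -> T) (x : 'I_n -> X) (t : T) : \bar R :=
  ereal_inf [set ((dH x x')%:R)%:E | x' in [set x' | f x' = t]].

From HB Require Import structures.
From mathcomp Require Import all_boot all_order all_algebra.
From mathcomp Require Import all_classical all_reals all_analysis.
Import Order.TTheory GRing.Theory Num.Theory.
Set Implicit Arguments. Unset Strict Implicit.
Local Open Scope ring_scope.

(* Three facts combine into the bound.
   - Group privacy: along a path of Hamming steps, eps-DP composes, so
     P(M(x) = t) <= e^(d_H(x,y) eps) P(M(y) = t) for all datasets x, y.
     The path is built by changing one disagreeing coordinate at a time.
   - Unbiasedness for the 0-1 loss says that f(x) is a mode of M(x):
     P(M(x) = t) <= P(M(x) = f(x)).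
   - The infimum defining len_f(x; t) ranges over natural numbers, so it is
     attained by some y with f(y) = t whenever t is in the range of f.
   For such a y, chaining privacy from x to y, the mode property at y and
   privacy back from y to x gives P(M(x) = f(x)) <= e^(2 d_H(x,y) eps) P(M(x) = t).
   If t is not in the range of f, len_f = +oo and the bound is trivial. *)

Section Hamming.
Variables (X : Type) (n : nat).
Implicit Types x y : 'I_n -> X.

Lemma dH_sym x y : dH x y = dH y x.
Proof.
rewrite /dH; apply: eq_card => i; rewrite !inE.
by apply/asboolP/asboolP => neq eq; apply: neq.
Qed.

Lemma dH_eq0 x y : dH x y = 0%N -> x = y.
Proof.
move=> d0; apply: funext => i; apply: contrapT => neq.
suff : (0 < dH x y)%N by rewrite d0.
by apply/card_gt0P; exists i; rewrite inE; apply/asboolP.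
Qed.

Lemma dH_step x y k : dH x y = k.+1 ->
  exists z, neighboring x z /\ dH z y = k.
Proof.
move=> dxy; have : (0 < dH x y)%N by rewrite dxy.
case/card_gt0P => i; rewrite inE => /asboolP neq_i.
pose z j := if j == i then y i else x j.
exists z; split.
  rewrite /neighboring /dH -(cards1 i); apply: subset_leq_card.
  by apply/fintype.subsetP => j; rewrite !inE /z; case: eqP => // _ /asboolP.
move: dxy; rewrite /dH (cardsD1 i) inE (asboolT neq_i) add1n => -[<-].
apply: eq_card => j; rewrite !inE /z.
by case: eqP => [->|_] //=; apply/asboolP; apply.
Qed.

End Hamming.

Section GroupPrivacy.
Variables (R : realType) (X : Type) (n : nat) (T : finType).
Variables (pM : ('I_n -> X) -> T -> R) (eps : R).
Hypothesis DP : eps_DP pM eps.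

Lemma dp_point x y t : neighboring x y -> pM x t <= expR eps * pM y t.
Proof. by move=> nxy; have := DP nxy [set t]; rewrite /probS !big_set1. Qed.

Lemma group_privacy x y t :
  pM x t <= expR ((dH x y)%:R * eps) * pM y t.
Proof.
suff bound k x' : dH x' y = k -> pM x' t <= expR (k%:R * eps) * pM y t.
  exact: bound.
elim: k x' => [|k IH] x' dxy.
  by rewrite (dH_eq0 dxy) mul0r expR0 mul1r.
have [z [nxz dzy]] := dH_step dxy.
apply: (le_trans (dp_point t nxz)).
rewrite -addn1 natrD mulrDl mul1r expRD mulrAC.
by rewrite [expR eps * _]mulrC ler_pM2r ?expR_gt0 // IH.
Qed.

End GroupPrivacy.

Lemma sum_L01 (R : realType) (T : finType) (p : T -> R) (a : T) :
  \sum_(s : T) p s * L01 R s a = \sum_s p s - p a.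
Proof.
rewrite (bigD1 a) //= [X in _ = X - _](bigD1 a) //= /L01 eqxx mulr0 add0r.
by rewrite addrC addrK; apply: eq_bigr => s /negbTE ->; rewrite mulr1.
Qed.

Lemma unbiased_L01_mode (R : realType) (X : Type) (n : nat) (T : finType)
  (f : ('I_n -> X) -> T) (pM : ('I_n -> X) -> T -> R) :
  unbiased (@L01 R T) f pM -> forall x t, pM x t <= pM x (f x).
Proof. by move=> U x t; have := U x t; rewrite !sum_L01 lerD2l lerN2. Qed.

Lemma unbiased_dp_bound (R : realType) (X : Type) (n : nat) (T : finType)
  (f : ('I_n -> X) -> T) (pM : ('I_n -> X) -> T -> R) (eps : R) :
  unbiased (@L01 R T) f pM -> eps_DP pM eps ->
  forall x y, expR (- (2 * (dH x y)%:R * eps)) * pM x (f x) <= pM x (f y).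
Proof.
move=> U DP x y; set e := expR ((dH x y)%:R * eps).
have to_y : pM x (f x) <= e * pM y (f x) := group_privacy DP x y (f x).
have mode_y : pM y (f x) <= pM y (f y) := unbiased_L01_mode U y (f x).
have back : pM y (f y) <= e * pM x (f y).
  by rewrite /e dH_sym; exact: group_privacy.
have chain : pM x (f x) <= e * e * pM x (f y).
  rewrite -mulrA (le_trans to_y) // ler_pM2l ?expR_gt0 //.
  exact: le_trans mode_y back.
have ee : e * e = expR (2 * (dH x y)%:R * eps).
  by rewrite /e -expRD -mulrA mulr2n mulrDl mul1r.
by rewrite expRN mulrC ler_pdivrMr ?expR_gt0 // mulrC -ee.
Qed.

Section InverseSensitivity.
Local Open Scope classical_set_scope.
Local Open Scope ereal_scope.
Variables (R : realType) (X : Type) (n : nat) (T : Type).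
Variables (f : ('I_n -> X) -> T) (x : 'I_n -> X) (t : T).

Lemma len_f_out_of_range : ~ (exists y, f y = t) -> len_f R f x t = +oo.
Proof.
move=> no_pre; rewrite /len_f.
have -> : [set y | f y = t] = set0.
  by apply/seteqP; split => y //= fy; apply: no_pre; exists y.
by rewrite image_set0 ereal_inf0.
Qed.

Lemma len_f_attained : (exists y, f y = t) ->
  exists2 y, f y = t & len_f R f x t = ((dH x y)%:R)%:E.
Proof.
move=> [y0 fy0].
pose at_dist k := `[< exists y, f y = t /\ dH x y = k >].
have ex_k : exists k, at_dist k by exists (dH x y0); apply/asboolP; exists y0.
case: (ex_minnP ex_k) => m /asboolP [y [fy dxy]] min_m.
exists y => //; apply/eqP; rewrite eq_le; apply/andP; split.
  by apply: ereal_inf_lbound; exists y.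
apply: le_ereal_inf_tmp => _ [z /= fz <-].
by rewrite dxy lee_fin ler_nat min_m //; apply/asboolP; exists z.
Qed.

End InverseSensitivity.

Local Open Scope ereal_scope.

Theorem lemmaA1 (R : realType) (X : Type) (n : nat) (T : finType)
  (f : ('I_n -> X) -> T) (eps : R) (pM : ('I_n -> X) -> T -> R) :
  (0 < eps)%R ->
  is_mechanism pM ->
  unbiased (@L01 R T) f pM ->
  eps_DP pM eps ->
  forall (x : 'I_n -> X) (t : T),
    (pM x t)%:E >= expeR (- (2%:E * len_f R f x t * eps%:E)) * (pM x (f x))%:E.
Proof.
move=> eps_gt0 mech U DP x t.
have [in_range|out_of_range] := pselect (exists y, f y = t).
  have [y <- ->] := len_f_attained R x in_range.
  by rewrite -!EFinM /= lee_fin; exact: unbiased_dp_bound U DP x y.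
rewrite len_f_out_of_range // mulry gtr0_sg // mul1e mulyr gtr0_sg // mul1e /=.
by rewrite mul0e lee_fin; case: (mech x).
Qed.
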